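(* Let $\lambda\in W(k)$ be a Teichmüller element and let $S=\sum_{\ell\ge0}b_\ell(t-\lambda)^\ell$ with $b_\ell\in K$. Suppose there are real numbers $\alpha\ge0$ and $\beta$ such that $v_p(b_\ell)\ge-(\alpha\log_p\ell+\beta)$ for all $\ell\ge1$. Write $$F(S)=\sum_{\ell\ge0}\sigma(b_\ell)\,(t^p-\sigma(\lambda))^\ell=\sum_{\ell\ge0}a_\ell(t-\lambda)^\ell$$ (as formal power series in $t-\lambda$). Then $v_p(a_\ell)\ge-(\alpha\log_p\ell+\beta)$ for all $\ell\ge1$.
   Context: Let $p$ be an odd prime, $k$ a finite field of characteristic $p$, $W(k)$ its ring of Witt vectors, $K$ its fraction field, $v_p$ the $p$-adic valuation on $K$, $\sigma$ the Frobenius automorphism of $K$, and $\log_p$ the real logarithm to base $p$. A Teichmüller element $\lambda\in W(k)$ satisfies $\sigma(\lambda)=\lambda^p$. Here $t^p-\sigma(\lambda)=(\lambda+(t-\lambda))^p-\lambda^p$ is expanded as a polynomial in $t-\lambda$ with zero constant term, so the sum defining $F(S)$ is a well-defined formal power series in $t-\lambda$. *)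

From Stdlib Require Import ZArith Reals.
From HB Require Import structures.
From mathcomp Require Import all_boot all_algebra.

Set Implicit Arguments.
Unset Strict Implicit.
Unset Printing Implicit Defensive.

Import GRing.Theory.

(* Abstract axiomatisation of the setting K = W(k)[1/p] with its p-adic
   valuation v_p and the Witt-vector Frobenius sigma.
   The valuation is given on nonzero elements; v_p(0) = +oo is encoded by
   treating the element 0 separately in every valuation inequality. *)

Definition p_adic_valuation (K : fieldType) (p : nat) (v : K -> Z) : Prop :=
  [/\ forall x y : K, (x != 0)%R -> (y != 0)%R -> v (x * y)%R = Z.add (v x) (v y),
      forall x y : K, (x != 0)%R -> (y != 0)%R -> (x + y != 0)%R ->
        Z.le (Z.min (v x) (v y)) (v (x + y)%R),
      ((p%:R : K) != 0)%R
    & v (p%:R : K)%R = Z.one].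

(* x lies in the valuation ring (i.e. x in W(k)): v_p(x) >= 0. *)
Definition integral (K : fieldType) (v : K -> Z) (x : K) : Prop :=
  x = 0%R \/ Z.le Z.zero (v x).

Definition frobenius_lift (K : fieldType) (p : nat) (v : K -> Z)
    (sigma : {rmorphism K -> K}) : Prop :=
  [/\ bijective sigma,
      forall x : K, (x != 0)%R -> v (sigma x) = v x
    & forall x : K, integral v x ->
        (sigma x - x ^+ p)%R = 0%R \/ Z.le Z.one (v (sigma x - x ^+ p)%R)].

Definition teichmuller (K : fieldType) (p : nat) (v : K -> Z)
    (sigma : {rmorphism K -> K}) (lambda : K) : Prop :=
  integral v lambda /\ sigma lambda = (lambda ^+ p)%R.

Definition vge (K : fieldType) (v : K -> Z) (x : K) (r : R) : Prop :=
  x = 0%R \/ Rle r (IZR (v x)).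

Definition log_p (p : nat) (x : R) : R := Rdiv (ln x) (ln (INR p)).

Definition lbound (p : nat) (alpha beta : R) (l : nat) : R :=
  Ropp (Rplus (Rmult alpha (log_p p (INR l))) beta).

(* The polynomial t^p - sigma(lambda), written in the variable u = t - lambda:
   (lambda + u)^p - sigma(lambda). *)
Definition tp_minus (K : fieldType) (sigma : {rmorphism K -> K}) (p : nat)
    (lambda : K) : {poly K} :=
  (('X + lambda%:P) ^+ p - (sigma lambda)%:P)%R.

(* Coefficient of (t - lambda)^n in F(S) = sum_l sigma(b_l)(t^p - sigma(lambda))^l.
   Since t^p - sigma(lambda) has zero constant term in t - lambda, only the
   terms with l <= n contribute to the coefficient of (t - lambda)^n. *)
Definition F_coef (K : fieldType) (sigma : {rmorphism K -> K}) (p : nat)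
    (lambda : K) (b : nat -> K) (n : nat) : K :=
  (\sum_(l < n.+1) sigma (b l) * ((tp_minus sigma p lambda) ^+ l)`_n)%R.

(* Write Q = t^p - sigma(lambda) as a polynomial in u = t - lambda.  Since
   lambda is integral and sigma(lambda) = lambda^p, Q has integral
   coefficients, hence so has every power Q^j.  The coefficient of u^l in
   F(S) is a_l = sum_(j <= l) sigma(b_j) [u^l] Q^j, where the j = 0 term
   vanishes for l >= 1.  Each remaining term is the product of sigma(b_j),
   whose valuation equals that of b_j (sigma is an isometry), with an
   integral element; and for 1 <= j <= l the bound -(alpha log_p j + beta)
   dominates -(alpha log_p l + beta) because alpha >= 0.  The ultrametric
   inequality then bounds the sum. *)
From Stdlib Require Import ZArith Reals Lia Lra.
From HB Require Import structures.
From mathcomp Require Import all_boot all_algebra.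

Set Implicit Arguments.
Unset Strict Implicit.
Unset Printing Implicit Defensive.

Import GRing.Theory.

Local Open Scope ring_scope.

Lemma lbound_antitone (p : nat) (alpha beta : R) (j l : nat) :
  prime p -> Rle 0 alpha -> (1 <= j)%N -> (j <= l)%N ->
  Rle (lbound p alpha beta l) (lbound p alpha beta j).
Proof.
move=> pp ha hj hjl.
have hp : Rlt 1 (INR p).
  by have := le_INR 2 p (ssrnat.leP (prime_gt1 pp)); simpl; lra.
have ln_p_pos : Rlt 0 (ln (INR p)) by rewrite -ln_1; apply: ln_increasing; lra.
have hj1 : Rle 1 (INR j) by have := le_INR 1 j (ssrnat.leP hj); simpl; lra.
have hjl' : Rle (INR j) (INR l) by apply: le_INR; apply/ssrnat.leP.
have ln_le : Rle (ln (INR j)) (ln (INR l)).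
  case: (Rle_lt_or_eq_dec _ _ hjl') => [hlt|->]; last exact: Rle_refl.
  by apply: Rlt_le; apply: ln_increasing; lra.
have inv_pos : Rle 0 (/ ln (INR p)) by apply: Rlt_le; apply: Rinv_0_lt_compat.
rewrite /lbound /log_p /Rdiv.
have := Rmult_le_compat_l _ _ _ ha (Rmult_le_compat_r _ _ _ inv_pos ln_le).
lra.
Qed.

Section ValuationBounds.
Variables (K : fieldType) (p : nat) (v : K -> Z).
Hypothesis hv : p_adic_valuation p v.

Lemma vge_add (r : R) (x y : K) : vge v x r -> vge v y r -> vge v (x + y) r.
Proof.
case: hv => _ v_add _ _.
case: (eqVneq x 0) => [->|x0]; first by rewrite add0r.
case: (eqVneq y 0) => [->|y0]; first by rewrite addr0.
case: (eqVneq (x + y) 0) => [-> _ _|xy0]; first by left.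
move=> [/eqP|hx]; first by rewrite (negPf x0).
move=> [/eqP|hy]; first by rewrite (negPf y0).
right; have := IZR_le _ _ (v_add x y x0 y0 xy0).
by case: (Z.min_dec (v x) (v y)) => ->; lra.
Qed.

Lemma vge_mul (r s : R) (x y : K) :
  vge v x r -> vge v y s -> vge v (x * y) (Rplus r s).
Proof.
case: hv => v_mul _ _ _.
case: (eqVneq x 0) => [-> _ _|x0]; first by rewrite mul0r; left.
case: (eqVneq y 0) => [-> _ _|y0]; first by rewrite mulr0; left.
move=> [/eqP|hx]; first by rewrite (negPf x0).
move=> [/eqP|hy]; first by rewrite (negPf y0).
by right; rewrite v_mul // plus_IZR; lra.
Qed.

Lemma vge_sum (r : R) (I : Type) (s : seq I) (P : pred I) (F : I -> K) :
  (forall i, P i -> vge v (F i) r) -> vge v (\sum_(i <- s | P i) F i) r.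
Proof. by move=> hF; apply: (big_ind (vge v ^~ r)) => //; [left | exact: vge_add]. Qed.

Lemma vge_weaken (r s : R) (x : K) : Rle s r -> vge v x r -> vge v x s.
Proof. by move=> hsr [->|hx]; [left | right; lra]. Qed.

Lemma v_one : v 1 = Z0.
Proof.
case: hv => v_mul _ _ _.
by have := v_mul 1 1 (oner_neq0 _) (oner_neq0 _); rewrite mulr1; lia.
Qed.

Lemma vge_opp (r : R) (x : K) : vge v x r -> vge v (- x) r.
Proof.
case: hv => v_mul _ _ _.
have m1_0 : (-1 : K) != 0 by rewrite oppr_eq0 oner_neq0.
have v_m1 : v (-1) = Z0.
  by have := v_mul _ _ m1_0 m1_0; rewrite mulrNN mulr1 v_one; lia.
case: (eqVneq x 0) => [-> _|x0]; first by rewrite oppr0; left.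
move=> [/eqP|hx]; first by rewrite (negPf x0).
by right; rewrite -mulN1r v_mul // v_m1.
Qed.

Lemma integral_vge (x : K) : integral v x <-> vge v x 0.
Proof.
by split=> [[->|h]|[->|h]]; [left | right; exact: IZR_le | left | right; exact: le_IZR].
Qed.

Lemma vge_one : vge v 1 0.
Proof. by right; rewrite v_one; lra. Qed.

Lemma vge_integral_exp (x : K) (n : nat) : vge v x 0 -> vge v (x ^+ n) 0.
Proof.
move=> hx; elim: n => [|n IHn]; first by rewrite expr0; exact: vge_one.
by rewrite exprS -(Rplus_0_r 0); exact: vge_mul.
Qed.

Definition integral_poly (q : {poly K}) : Prop := forall i, vge v q`_i 0.

Lemma integral_polyC (c : K) : vge v c 0 -> integral_poly c%:P.
Proof. by move=> hc i; rewrite coefC; case: (i == 0)%N => //; left. Qed.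

Lemma integral_polyX : integral_poly 'X.
Proof. by move=> i; rewrite coefX; case: (i == 1)%N; [exact: vge_one | left]. Qed.

Lemma integral_polyD (q q' : {poly K}) :
  integral_poly q -> integral_poly q' -> integral_poly (q + q').
Proof. by move=> hq hq' i; rewrite coefD; exact: vge_add. Qed.

Lemma integral_polyN (q : {poly K}) : integral_poly q -> integral_poly (- q).
Proof. by move=> hq i; rewrite coefN; exact: vge_opp. Qed.

Lemma integral_polyM (q q' : {poly K}) :
  integral_poly q -> integral_poly q' -> integral_poly (q * q').
Proof.
move=> hq hq' i; rewrite coefM; apply: vge_sum => j _.
by rewrite -(Rplus_0_r 0); exact: vge_mul.
Qed.

Lemma integral_polyX_exp (q : {poly K}) (n : nat) :
  integral_poly q -> integral_poly (q ^+ n).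
Proof.
move=> hq; elim: n => [|n IHn]; last by rewrite exprS; exact: integral_polyM.
by rewrite expr0 -polyC1; apply: integral_polyC; exact: vge_one.
Qed.

Lemma tp_minus_integral (sigma : {rmorphism K -> K}) (lambda : K) :
  vge v lambda 0 -> vge v (sigma lambda) 0 ->
  integral_poly (tp_minus sigma p lambda).
Proof.
move=> hlam hmu; apply: integral_polyD; last exact/integral_polyN/integral_polyC.
exact/integral_polyX_exp/integral_polyD/integral_polyC/hlam/integral_polyX.
Qed.

(* The key estimate: for n >= 1 the coefficient of u^n in sum_j c_j Q^j,
   Q integral, is bounded below by any common bound on c_1, ..., c_n
   (the j = 0 term contributes nothing since [u^n] Q^0 = 0). *)
Lemma truncated_composition_bound (c : nat -> K) (Q : {poly K}) (n : nat)
    (r : R) :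
  (1 <= n)%N -> integral_poly Q ->
  (forall j, (1 <= j <= n)%N -> vge v (c j) r) ->
  vge v (\sum_(j < n.+1) c j * (Q ^+ j)`_n) r.
Proof.
move=> hn hQ hc; apply: vge_sum => -[[|j] hj] _ /=.
  by rewrite expr0 coef1 eqn0Ngt hn mulr0; left.
rewrite -(Rplus_0_r r); apply: vge_mul; first exact: hc.
exact: integral_polyX_exp.
Qed.

Lemma vge_frobenius (sigma : {rmorphism K -> K}) (r : R) (x : K) :
  frobenius_lift p v sigma -> vge v x r -> vge v (sigma x) r.
Proof.
case=> _ v_sigma _; case: (eqVneq x 0) => [-> _|x0]; first by rewrite rmorph0; left.
by move=> [/eqP|hx]; [rewrite (negPf x0) | right; rewrite v_sigma].
Qed.

End ValuationBounds.

Theorem mainTheorem7 (K : fieldType) (p : nat) (v : K -> Z)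
    (sigma : {rmorphism K -> K}) (lambda : K) (b : nat -> K) (alpha beta : R) :
  prime p -> odd p ->
  p_adic_valuation p v ->
  frobenius_lift p v sigma ->
  teichmuller p v sigma lambda ->
  Rle 0 alpha ->
  (forall l : nat, (1 <= l)%N -> vge v (b l) (lbound p alpha beta l)) ->
  forall l : nat, (1 <= l)%N ->
    vge v (F_coef sigma p lambda b l) (lbound p alpha beta l).
Proof.
move=> pp _ hv hsig [lam_int sig_lam] ha hb l hl.
have hlam : vge v lambda 0 by apply/integral_vge.
have hmu : vge v (sigma lambda) 0.
  by rewrite sig_lam; exact: (vge_integral_exp hv).
apply: (truncated_composition_bound (c := sigma \o b) hv hl
  (tp_minus_integral hv hlam hmu)).
move=> j /andP[hj hjl]; apply: vge_weaken (lbound_antitone beta pp ha hj hjl) _.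
exact/(vge_frobenius hsig)/hb.
Qed.
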